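(* Let $n\ge 1$ and let $f\colon \mathbb Z_2^n\to\mathbb Z_2^n$ be any map. For $\vec y\in\mathbb Z_2^n$ let $A_{\vec y}=\{\vec x\in\mathbb Z_2^n : f(\vec x)=\vec y\}$ and let $d=\max_{\vec y\in\mathbb Z_2^n}|A_{\vec y}|$. Then for every integer $q$ with $0\le q<\lceil \log_2 d\rceil$ there is no reversible circuit consisting of NOT, CNOT and 2-CNOT gates on $n+q$ lines that implements $f$ with $q$ additional inputs.
   Context: For $m\ge1$, a $k$-CNOT gate $C^m_{i_1,\dots,i_k;j}$ on $m$ lines (with $j\notin\{i_1,\dots,i_k\}$, indices distinct) is the transformation $\mathbb Z_2^m\to\mathbb Z_2^m$, $\langle x_1,\dots,x_m\rangle\mapsto\langle x_1,\dots,x_j\oplus (x_{i_1}\wedge\dots\wedge x_{i_k}),\dots,x_m\rangle$ (only coordinate $j$ changes). NOT is the case $k=0$ (i.e. $x_j\mapsto x_j\oplus 1$), CNOT is $k=1$, 2-CNOT (Toffoli) is $k=2$. A reversible circuit on $m$ lines is a finite sequence of such gates; it computes the composition $g\colon\mathbb Z_2^m\to\mathbb Z_2^m$ of its gates, and its complexity is the number of gates. Let $\phi_{n,n+q}(\langle x_1,\dots,x_n\rangle)=\langle x_1,\dots,x_n,0,\dots,0\rangle\in\mathbb Z_2^{n+q}$ and $\psi_{n+q,n}(\langle x_1,\dots,x_{n+q}\rangle)=\langle x_1,\dots,x_n\rangle$. A circuit on $n+q$ lines computing $g$ implements $f\colon\mathbb Z_2^n\to\mathbb Z_2^n$ with $q$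 additional inputs if $\psi_{n+q,n}(g(\phi_{n,n+q}(\vec x)))=f(\vec x)$ for all $\vec x\in\mathbb Z_2^n$. *)

From mathcomp Require Import all_boot.
Set Implicit Arguments. Unset Strict Implicit. Unset Printing Implicit Defensive.

(* Boolean vectors of Z_2^m, indexed by lines 'I_m (line i+1 of the paper is index i). *)
Definition bvec (m : nat) := {ffun 'I_m -> bool}.

Record gate (m : nat) := Gate { ctrls : seq 'I_m; tgt : 'I_m }.

Definition gate_ok (m : nat) (g : gate m) : bool :=
  [&& uniq (ctrls g), tgt g \notin ctrls g & size (ctrls g) <= 2].

(* Semantics: x_j <- x_j xor (conjunction of controls); empty conjunction = 1 (NOT). *)
Definition apply_gate (m : nat) (g : gate m) (x : bvec m) : bvec m :=
  [ffun j => if j == tgt g then x j (+) all (fun i => x i) (ctrls g) else x j].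

Definition circuit (m : nat) := seq (gate m).

Definition run (m : nat) (c : circuit m) (x : bvec m) : bvec m :=
  foldl (fun y g => apply_gate g y) x c.

Definition phi (n q : nat) (x : bvec n) : bvec (n + q) :=
  [ffun i : 'I_(n + q) => match split i with inl j => x j | inr _ => false end].

Definition psi (n q : nat) (y : bvec (n + q)) : bvec n :=
  [ffun j : 'I_n => y (lshift q j)].

Definition implements (n q : nat) (c : circuit (n + q)) (f : bvec n -> bvec n) : Prop :=
  forall x : bvec n, @psi n q (run c (@phi n q x)) = f x.

Definition max_preimage (n : nat) (f : bvec n -> bvec n) : nat :=
  \max_(y : bvec n) #|[set x : bvec n | f x == y]|.

(* ceil(log2 d) for d >= 1: the least e with d <= 2^e (MathComp's up_log). *)
Definition ceil_log2 (d : nat) : nat := up_log 2 d.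

(* Every gate is an involution, so a circuit computes a bijection of
   Z_2^(n+q).  Two inputs in the same fibre A_y produce outputs that agree on
   the first n lines, so by injectivity they must differ on the q additional
   lines; hence |A_y| <= 2^q for every y, i.e. ceil(log2 d) <= q. *)
From mathcomp Require Import all_boot.

Set Implicit Arguments.
Unset Strict Implicit.
Unset Printing Implicit Defensive.

Lemma apply_gateK (m : nat) (g : gate m) :
  tgt g \notin ctrls g -> involutive (apply_gate g).
Proof.
move=> tgt_ctrls x; apply/ffunP=> j; rewrite !ffunE.
case: eqP => [->|//]; rewrite -addbA.
have -> : all (fun i => apply_gate g x i) (ctrls g) = all (fun i => x i) (ctrls g).
  apply: eq_in_all => i i_ctrl; rewrite ffunE; case: eqP => // i_tgt.
  by move: tgt_ctrls; rewrite -i_tgt i_ctrl.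
by rewrite addbb addbF.
Qed.

Lemma run_inj (m : nat) (c : circuit m) : all (@gate_ok m) c -> injective (run c).
Proof.
elim: c => [_ //|g c IHc] /= /andP[/and3P[_ tgt_ctrls _] c_ok] x y /= run_xy.
exact: (inv_inj (apply_gateK tgt_ctrls)) (IHc c_ok _ _ run_xy).
Qed.

Section Ancilla.

Variables n q : nat.

Definition ancilla (y : bvec (n + q)) : bvec q := [ffun k => y (rshift n k)].

Lemma phiK : cancel (@phi n q) (@psi n q).
Proof.
by move=> x; apply/ffunP=> j; rewrite !ffunE -[lshift q j]/(unsplit (inl _ j)) unsplitK.
Qed.

Lemma psi_ancilla_inj (y1 y2 : bvec (n + q)) :
  psi y1 = psi y2 -> ancilla y1 = ancilla y2 -> y1 = y2.
Proof.
move=> psi12 anc12; apply/ffunP=> i; rewrite -(splitK i).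
case: (split i) => [j|k].
- by have := congr1 (fun v : bvec n => v j) psi12; rewrite !ffunE.
- by have := congr1 (fun v : bvec q => v k) anc12; rewrite !ffunE.
Qed.

Lemma card_fibre_psi_le (g : bvec (n + q) -> bvec (n + q)) (y : bvec n) :
  injective g -> #|[set x | psi (g (phi q x)) == y]| <= 2 ^ q.
Proof.
move=> g_inj.
have anc_inj : {in [set x | psi (g (phi q x)) == y] &,
                 injective (fun x => ancilla (g (phi q x)))}.
  move=> x1 x2; rewrite !inE => /eqP psi1 /eqP psi2 anc12.
  apply: (can_inj phiK); apply: g_inj; apply: psi_ancilla_inj => //.
  by rewrite psi1 psi2.
rewrite -(card_in_imset anc_inj); apply: leq_trans (max_card _) _.
by rewrite card_ffun card_bool card_ord.
Qed.

Lemma max_preimage_le (c : circuit (n + q)) (f : bvec n -> bvec n) :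
  all (@gate_ok (n + q)) c -> implements c f -> max_preimage f <= 2 ^ q.
Proof.
move=> c_ok c_f; apply/bigmax_leqP => y _.
have -> : [set x | f x == y] = [set x | psi (run c (phi q x)) == y].
  by apply/setP=> x; rewrite !inE c_f.
exact: card_fibre_psi_le (run_inj c_ok).
Qed.

End Ancilla.

Theorem mainTheorem1 (n : nat) (f : bvec n -> bvec n) (q : nat) :
  0 < n -> q < ceil_log2 (max_preimage f) ->
  ~ exists c : circuit (n + q), all (@gate_ok (n + q)) c /\ implements c f.
Proof.
move=> _ q_lt [c [c_ok c_f]].
have /(up_log_min (isT : 1 < 2)) := max_preimage_le c_ok c_f.
by rewrite /ceil_log2 leqNgt q_lt.
Qed.
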